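(* Let $b>0$ and $h:\mathbb{R}_{\ge0}\to\mathbb{R}$, $h(x)=x$ if $x\le b$ and $h(x)=0$ otherwise. For $j=1,\dots,n$ let $\Theta_j$ be a positive random variable with continuous density $\theta_j$ on $(0,\infty)$ such that $\int_z^\infty\theta_j(y)/y\,dy<\infty$ for all $z>0$, and define for $z>0$ \[ \Omega_j(z)=\int_z^\infty\frac{\theta_j(y)}{y}\,dy-\theta_j(z). \] Let $\mathcal{I}:\mathbb{R}^n_{\ge0}\to\mathbb{R}^n_{>0}$ be differentiable (not necessarily monotone) and define $f_j(p)=\mathbb{E}_{\Theta_j}\big[h(\mathcal{I}_j(p)/\Theta_j)\big]$, $f=(f_1,\dots,f_n)^T$. Then for every $p$, \[ |||\nabla f(p)|||_\infty\le\max_i\big|\Omega_i\big(\mathcal{I}_i(p)/b\big)\big|\ |||\nabla\mathcal{I}(p)|||_\infty . \]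
   Context: Gradient convention: $[\nabla f(p)]_{ij}=\partial f_j(p)/\partial p_i$; $|||A|||_\infty=\max_i\sum_j|A_{ij}|$. *)

From Stdlib Require Import Reals Lra Lia.
Open Scope R_scope.

Definition hfun (b x : R) : R := if Rle_dec x b then x else 0.

(* Vectors of R^n are represented as nat -> R, only indices k < n matter. *)
Definition in_dom (n : nat) (p : nat -> R) : Prop :=
  forall k, (k < n)%nat -> 0 <= p k.

Definition upd (p : nat -> R) (i : nat) (t : R) : nat -> R :=
  fun k => if Nat.eqb k i then p k + t else p k.

(* partial derivative of F w.r.t. coordinate i at p equals l, the limit being
   taken within the domain R^n_{>=0} (one-sided on the boundary). *)
Definition partial_at (n : nat) (F : (nat -> R) -> R) (p : nat -> R) (i : nat) (l : R) : Prop :=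
  forall eps, 0 < eps -> exists delta, 0 < delta /\
    forall t, t <> 0 -> Rabs t < delta -> in_dom n (upd p i t) ->
      Rabs ((F (upd p i t) - F p) / t - l) < eps.

Definition improper_int_inf (g : R -> R) (z l : R) : Prop :=
  (forall M, z <= M -> inhabited (Riemann_integrable g z M)) /\
  forall eps, 0 < eps -> exists M0, forall M (pr : Riemann_integrable g z M),
    z <= M -> M0 <= M -> Rabs (RiemannInt pr - l) < eps.

Definition improper_int_0_inf (g : R -> R) (l : R) : Prop :=
  (forall a M, 0 < a -> a <= M -> inhabited (Riemann_integrable g a M)) /\
  forall eps, 0 < eps -> exists delta, 0 < delta /\ exists M0,
    forall a M (pr : Riemann_integrable g a M),
      0 < a -> a < delta -> a <= M -> M0 <= M -> Rabs (RiemannInt pr - l) < eps.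

Fixpoint sumR (n : nat) (f : nat -> R) : R :=
  match n with O => 0 | S k => sumR k f + f k end.

(* max_{i<n} f i  (0 for n = 0; only applied to nonnegative quantities) *)
Fixpoint maxR (n : nat) (f : nat -> R) : R :=
  match n with O => 0 | S k => Rmax (maxR k f) (f k) end.

Definition row_sum_norm (n : nat) (A : nat -> nat -> R) : R :=
  maxR n (fun i => sumR n (fun j => Rabs (A i j))).

(* Since h(x/y) vanishes for y < x/b and equals x/y otherwise,
   f_j(q) = I_j(q) T_j(I_j(q)/b) with T_j(z) = \int_z^oo theta_j(y)/y dy.
   From T_j'(z) = -theta_j(z)/z, the derivative of x |-> x T_j(x/b) is
   T_j(x/b) - theta_j(x/b) = Omega_j(x/b), so by the chain rule
   d f_j/d p_i = Omega_j(I_j(p)/b) d I_j/d p_i: the gradient of f is that of I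
   with its columns scaled, and the row-sum norm bound follows. *)

From Stdlib Require Import Reals Lra Lia.
From Coquelicot Require Import Coquelicot.
Open Scope R_scope.

Lemma improper_int_inf_ex_RInt g z l M :
  improper_int_inf g z l -> z <= M -> ex_RInt g z M.
Proof.
  intros [Hex _] HM. destruct (Hex M HM) as [pr]. exact (ex_RInt_Reals_1 _ _ _ pr).
Qed.

Lemma improper_int_inf_is_lim g z l :
  improper_int_inf g z l -> is_lim (fun M => RInt g z M) p_infty l.
Proof.
  intros [Hex Hlim]. apply is_lim_spec. intros eps.
  destruct (Hlim eps (cond_pos eps)) as [M0 HM0].
  exists (Rmax z M0). intros M HM.
  pose proof (Rmax_l z M0); pose proof (Rmax_r z M0).
  destruct (Hex M ltac:(lra)) as [pr]. rewrite (RInt_Reals _ _ _ pr). apply HM0; lra.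
Qed.

Lemma improper_int_0_inf_is_lim f l z : improper_int_0_inf f l -> 0 < z ->
  (forall y, 0 < y -> y < z -> f y = 0) -> is_lim (fun M => RInt f z M) p_infty l.
Proof.
  intros [Hex Hlim] Hz Hf0. apply is_lim_spec. intros eps.
  destruct (Hlim eps (cond_pos eps)) as [delta [Hdelta [M0 HM0]]].
  set (a := Rmin (delta / 2) (z / 2)).
  assert (Ha : 0 < a) by (apply Rmin_glb_lt; lra).
  assert (Haz : a < z) by (eapply Rle_lt_trans; [apply Rmin_r | lra]).
  assert (Had : a < delta) by (eapply Rle_lt_trans; [apply Rmin_l | lra]).
  exists (Rmax z M0). intros M HM.
  pose proof (Rmax_l z M0); pose proof (Rmax_r z M0).
  destruct (Hex a M Ha ltac:(lra)) as [pr].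
  assert (EaM := ex_RInt_Reals_1 _ _ _ pr).
  assert (Hnull : RInt f a z = 0).
  { rewrite (RInt_ext _ (fun _ => 0)).
    - rewrite RInt_const. apply (@scal_zero_r R_Ring R_ModuleSpace).
    - intros y Hy. rewrite Rmin_left, Rmax_right in Hy by lra. apply Hf0; lra. }
  assert (HC := RInt_Chasles f a z M (ex_RInt_Chasles_1 _ a z M ltac:(lra) EaM)
                  (ex_RInt_Chasles_2 _ a z M ltac:(lra) EaM)).
  change (RInt f a z + RInt f z M = RInt f a M) in HC.
  rewrite Hnull, Rplus_0_l in HC. rewrite HC, (RInt_Reals _ _ _ pr).
  apply HM0; lra.
Qed.

Section TailIntegral.

Variables g G : R -> R.
Hypothesis tail : forall z, 0 < z -> improper_int_inf g z (G z).

Lemma tail_ex_RInt z w : 0 < z -> 0 < w -> ex_RInt g z w.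
Proof.
  intros Hz Hw. destruct (Rle_lt_dec z w) as [Hzw | Hwz].
  - exact (improper_int_inf_ex_RInt _ _ _ _ (tail z Hz) Hzw).
  - apply ex_RInt_swap. apply (improper_int_inf_ex_RInt _ _ _ _ (tail w Hw)). lra.
Qed.

Lemma tail_Chasles z w : 0 < z -> z <= w -> G z = RInt g z w + G w.
Proof.
  intros Hz Hzw.
  assert (Hsplit : is_lim (fun M => RInt g z M) p_infty (RInt g z w + G w)).
  { apply is_lim_ext_loc with (fun M => RInt g z w + RInt g w M).
    - exists w. intros M HM.
      exact (RInt_Chasles g z w M (tail_ex_RInt z w Hz ltac:(lra))
               (tail_ex_RInt w M ltac:(lra) ltac:(lra))).
    - apply is_lim_plus'; [apply is_lim_const |].
      apply improper_int_inf_is_lim, tail. lra. }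
  apply is_lim_unique in Hsplit.
  rewrite (is_lim_unique _ _ _ (improper_int_inf_is_lim _ _ _ (tail z Hz))) in Hsplit.
  injection Hsplit. auto.
Qed.

Lemma tail_eq_sub_RInt z w : 0 < z -> 0 < w -> G w = G z - RInt g z w.
Proof.
  intros Hz Hw. destruct (Rle_lt_dec z w).
  - rewrite (tail_Chasles z w); auto. ring.
  - rewrite (tail_Chasles w z), <- (opp_RInt_swap g w z) by (auto using tail_ex_RInt; lra).
    change (opp (RInt g w z)) with (- RInt g w z). ring.
Qed.

Lemma tail_is_derive z : 0 < z -> continuous g z -> is_derive G z (- g z).
Proof.
  intros Hz Hg.
  assert (Hpos : locally z (fun w => 0 < w)) by (apply (open_gt 0); auto).
  assert (HR : is_derive (RInt g z) z (g z)).
  { apply is_derive_RInt with z; auto.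
    apply (filter_imp (fun w => 0 < w)); auto.
    intros w Hw. apply RInt_correct, tail_ex_RInt; auto. }
  apply is_derive_ext_loc with (fun w => G z - RInt g z w).
  - apply (filter_imp (fun w => 0 < w)); auto.
    intros w Hw. symmetry. apply tail_eq_sub_RInt; auto.
  - evar (l : R). replace (- g z) with l.
    + exact (is_derive_minus (K := R_AbsRing) (V := R_NormedModule) _ _ z _ _
               (is_derive_const _ _) HR).
    + unfold l, minus, plus, opp, zero; simpl; ring.
Qed.

End TailIntegral.

Lemma scaled_tail_is_derive (th G : R -> R) b x : 0 < b -> 0 < x ->
  (forall z, 0 < z -> improper_int_inf (fun y => th y / y) z (G z)) ->
  continuity_pt th (x / b) ->
  is_derive (fun x => x * G (x / b)) x (G (x / b) - th (x / b)).
Proof.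
  intros Hb Hx HT Hth.
  assert (Hz : 0 < x / b) by (apply Rdiv_lt_0_compat; lra).
  assert (Hg : continuous (fun y => th y / y) (x / b)).
  { apply continuity_pt_filterlim, (continuity_pt_div th (fun y => y)); auto.
    - apply continuity_pt_id.
    - lra. }
  assert (Hscale : is_derive (fun x => x / b) x (/ b)) by (auto_derive; [auto | field; lra]).
  assert (HGb := is_derive_comp G _ x _ _ (tail_is_derive _ _ HT _ Hz Hg) Hscale).
  assert (Hprod := is_derive_mult (fun x => x) _ x _ _ (is_derive_id x) HGb Rmult_comm).
  replace (G (x / b) - th (x / b))
    with (plus (mult 1 (G (x / b))) (mult x (scal (/ b) (- (th (x / b) / (x / b))))))
    by (unfold plus, mult, scal; simpl; unfold mult; simpl; field; lra).
  exact Hprod.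
Qed.

Lemma hfun_div_eq0 b x y : 0 < y -> b * y < x -> hfun b (x / y) = 0.
Proof.
  intros Hy Hxy. unfold hfun. destruct (Rle_dec (x / y) b) as [Hle | _]; auto.
  apply Rmult_le_compat_r with (r := y) in Hle; [| lra].
  field_simplify in Hle; lra.
Qed.

Lemma hfun_div_eq b x y : 0 < y -> x <= b * y -> hfun b (x / y) = x / y.
Proof.
  intros Hy Hxy. unfold hfun. destruct (Rle_dec (x / y) b) as [_ | Hn]; auto.
  exfalso. apply Hn. apply Rmult_le_reg_r with y; auto. field_simplify; lra.
Qed.

Lemma truncated_mean_eq (th G : R -> R) b x Fv : 0 < b -> 0 < x ->
  (forall z, 0 < z -> improper_int_inf (fun y => th y / y) z (G z)) ->
  improper_int_0_inf (fun y => hfun b (x / y) * th y) Fv ->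
  Fv = x * G (x / b).
Proof.
  intros Hb Hx HT HF.
  set (z := x / b).
  assert (Hz : 0 < z) by (apply Rdiv_lt_0_compat; lra).
  assert (Hbz : b * z = x) by (unfold z; field; lra).
  assert (HFz : is_lim (fun M => RInt (fun y => hfun b (x / y) * th y) z M) p_infty Fv).
  { apply improper_int_0_inf_is_lim; auto.
    intros y Hy Hyz. rewrite hfun_div_eq0; [ring | lra | nra]. }
  assert (HGz : is_lim (fun M => RInt (fun y => hfun b (x / y) * th y) z M) p_infty
                  (x * G z)).
  { apply is_lim_ext_loc with (fun M => x * RInt (fun y => th y / y) z M).
    - exists z. intros M HM.
      assert (HzM : ex_RInt (fun y => th y / y) z M)
        by (apply (improper_int_inf_ex_RInt _ _ _ _ (HT z Hz)); lra).
      symmetry. rewrite (RInt_ext _ (fun y => scal x (th y / y))).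
      + exact (RInt_scal (V := R_CompleteNormedModule) _ z M x HzM).
      + intros y Hy. rewrite Rmin_left, Rmax_right in Hy by lra.
        change (hfun b (x / y) * th y = x * (th y / y)).
        rewrite hfun_div_eq by nra. field. lra.
    - exact (is_lim_scal_l _ x _ _ (improper_int_inf_is_lim _ _ _ (HT z Hz))). }
  apply is_lim_unique in HFz. rewrite (is_lim_unique _ _ _ HGz) in HFz.
  injection HFz. auto.
Qed.

Lemma Rabs_slope_lt a c t eps :
  t <> 0 -> Rabs (a - c * t) < eps * Rabs t -> Rabs (a / t - c) < eps.
Proof.
  intros Ht H. assert (Hpos : 0 < Rabs t) by (apply Rabs_pos_lt; auto).
  replace (a / t - c) with ((a - c * t) / t) by (field; auto).
  rewrite Rabs_div by auto. apply Rmult_lt_reg_r with (Rabs t); auto.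
  field_simplify; lra.
Qed.

Lemma partial_at_linear_approx n H p i l : partial_at n H p i l ->
  forall eps, 0 < eps -> exists d, 0 < d /\ forall t, t <> 0 -> Rabs t < d ->
    in_dom n (upd p i t) -> Rabs (H (upd p i t) - H p - l * t) <= eps * Rabs t.
Proof.
  intros Hl eps Heps. destruct (Hl eps Heps) as [d [Hd Ht]].
  exists d. split; auto. intros t Ht0 Htd Hdom.
  replace (H (upd p i t) - H p - l * t) with (t * ((H (upd p i t) - H p) / t - l))
    by (field; auto).
  rewrite Rabs_mult, Rmult_comm. apply Rmult_le_compat_r; [apply Rabs_pos |].
  left. auto.
Qed.

Lemma is_derive_linear_approx (f : R -> R) x l : is_derive f x l ->
  forall eps : posreal, exists d : posreal, forall w, Rabs (w - x) < d ->
    Rabs (f w - f x - l * (w - x)) <= eps * Rabs (w - x).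
Proof.
  intros [_ Hd] eps.
  destruct (Hd x (fun P HP => HP) eps) as [d Hw].
  exists d. intros w Hwx. specialize (Hw w Hwx).
  unfold norm, minus, plus, opp, scal in Hw; simpl in Hw.
  unfold mult in Hw; simpl in Hw.
  replace (f w - f x - l * (w - x)) with (f w + - f x + - ((w + - x) * l)) by ring.
  exact Hw.
Qed.

(* The error of the composite splits as
   [Phi (H q) - Phi (H p) - L u] + L [u - l t] with u = H q - H p = O(t). *)
Lemma partial_at_comp n H (Phi : R -> R) p i l L :
  partial_at n H p i l -> is_derive Phi (H p) L ->
  partial_at n (fun q => Phi (H q)) p i (L * l).
Proof.
  intros Hl HPhi eps Heps.
  assert (HL := Rabs_pos L). assert (Hla := Rabs_pos l).
  assert (He1 : 0 < eps / (2 * (Rabs l + 1))) by (apply Rdiv_lt_0_compat; lra).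
  set (e2 := Rmin 1 (eps / (2 * (Rabs L + 1)))).
  assert (He2 : 0 < e2) by (apply Rmin_glb_lt; [lra | apply Rdiv_lt_0_compat; lra]).
  assert (He2L : Rabs L * e2 < eps / 2).
  { apply Rle_lt_trans with (Rabs L * (eps / (2 * (Rabs L + 1)))).
    - apply Rmult_le_compat_l, Rmin_r; auto.
    - apply Rmult_lt_reg_r with (2 * (Rabs L + 1)); [lra |].
      field_simplify; nra. }
  destruct (is_derive_linear_approx _ _ _ HPhi (mkposreal _ He1)) as [dPhi HdPhi].
  destruct (partial_at_linear_approx _ _ _ _ _ Hl e2 He2) as [dH [HdH HH]].
  exists (Rmin dH (dPhi / (Rabs l + 1))). split.
  { apply Rmin_glb_lt; auto. apply Rdiv_lt_0_compat; [apply cond_pos | lra]. }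
  intros t Ht Htd Hdom.
  assert (Ht0 : 0 < Rabs t) by (apply Rabs_pos_lt; auto).
  assert (HtH : Rabs t < dH) by (eapply Rlt_le_trans; [exact Htd | apply Rmin_l]).
  assert (HtPhi : Rabs t * (Rabs l + 1) < dPhi).
  { apply Rmult_lt_reg_r with (/ (Rabs l + 1)); [apply Rinv_0_lt_compat; lra |].
    replace (Rabs t * (Rabs l + 1) * / (Rabs l + 1)) with (Rabs t) by (field; lra).
    eapply Rlt_le_trans; [exact Htd | apply Rmin_r]. }
  set (u := H (upd p i t) - H p).
  assert (Hu : Rabs (u - l * t) <= e2 * Rabs t) by exact (HH t Ht HtH Hdom).
  assert (Hua : Rabs u <= (Rabs l + 1) * Rabs t).
  { replace u with ((u - l * t) + l * t) by ring.
    eapply Rle_trans; [apply Rabs_triang |]. rewrite Rabs_mult.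
    assert (e2 <= 1) by apply Rmin_l. nra. }
  assert (HP := HdPhi (H (upd p i t)) ltac:(fold u; nra)).
  fold u in HP. simpl in HP.
  apply Rabs_slope_lt; auto.
  replace (Phi (H (upd p i t)) - Phi (H p) - L * l * t)
    with ((Phi (H (upd p i t)) - Phi (H p) - L * u) + L * (u - l * t)) by (unfold u; ring).
  eapply Rle_lt_trans; [apply Rabs_triang |]. rewrite Rabs_mult.
  assert (Rabs L * Rabs (u - l * t) <= Rabs L * e2 * Rabs t)
    by (rewrite Rmult_assoc; apply Rmult_le_compat_l; auto).
  assert (eps / (2 * (Rabs l + 1)) * Rabs u <= eps / 2 * Rabs t).
  { apply Rle_trans with (eps / (2 * (Rabs l + 1)) * ((Rabs l + 1) * Rabs t)).
    - apply Rmult_le_compat_l; lra.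
    - right. field. lra. }
  nra.
Qed.

Lemma partial_at_ext_in_dom n H1 H2 p i l :
  (forall q, in_dom n q -> H1 q = H2 q) -> in_dom n p ->
  partial_at n H1 p i l -> partial_at n H2 p i l.
Proof.
  intros Heq Hp Hl eps Heps. destruct (Hl eps Heps) as [d [Hd Ht]].
  exists d. split; auto. intros t Ht0 Htd Hdom.
  rewrite <- !Heq by auto. auto.
Qed.

Lemma maxR_ub n f k : (k < n)%nat -> f k <= maxR n f.
Proof.
  induction n as [| n IH]; intros Hk; [lia |]. simpl.
  destruct (Nat.eq_dec k n) as [-> | Hne]; [apply Rmax_r |].
  eapply Rle_trans; [apply IH; lia | apply Rmax_l].
Qed.

Lemma maxR_ge0 n f : 0 <= maxR n f.
Proof.
  induction n as [| n IH]; simpl; [lra |].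
  eapply Rle_trans; [exact IH | apply Rmax_l].
Qed.

Lemma maxR_lub n f c : 0 <= c -> (forall k, (k < n)%nat -> f k <= c) -> maxR n f <= c.
Proof.
  induction n as [| n IH]; intros Hc H; simpl; auto.
  apply Rmax_lub; [apply IH; auto | apply H; lia].
Qed.

Lemma sumR_le n f g : (forall k, (k < n)%nat -> f k <= g k) -> sumR n f <= sumR n g.
Proof.
  induction n as [| n IH]; intros H; simpl; [lra |].
  assert (sumR n f <= sumR n g) by (apply IH; auto).
  assert (f n <= g n) by (apply H; lia). lra.
Qed.

Lemma sumR_scal_l n c f : sumR n (fun k => c * f k) = c * sumR n f.
Proof. induction n as [| n IH]; simpl; [ring |]. rewrite IH. ring. Qed.

Lemma row_sum_norm_scale_cols n (c : nat -> R) A :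
  row_sum_norm n (fun i j => c j * A i j)
    <= maxR n (fun j => Rabs (c j)) * row_sum_norm n A.
Proof.
  set (m := maxR n (fun j => Rabs (c j))).
  assert (Hm : 0 <= m) by apply maxR_ge0.
  apply maxR_lub; [apply Rmult_le_pos; auto; apply maxR_ge0 |].
  intros i Hi.
  apply Rle_trans with (sumR n (fun j => m * Rabs (A i j))).
  - apply sumR_le. intros j Hj. rewrite Rabs_mult.
    apply Rmult_le_compat_r; [apply Rabs_pos |].
    exact (maxR_ub n (fun j => Rabs (c j)) j Hj).
  - rewrite sumR_scal_l. apply Rmult_le_compat_l; auto.
    exact (maxR_ub n (fun i => sumR n (fun j => Rabs (A i j))) i Hi).
Qed.
Theorem mainTheorem6 (n : nat) (b : R) (theta Om : nat -> R -> R)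
  (I F : (nat -> R) -> nat -> R) (p : nat -> R) (dI : nat -> nat -> R) :
  0 < b ->
  (forall j, (j < n)%nat -> forall y, 0 < y -> continuity_pt (theta j) y) ->
  (forall j, (j < n)%nat -> forall y, 0 < y -> 0 <= theta j y) ->
  (forall j, (j < n)%nat -> improper_int_0_inf (theta j) 1) ->
  (forall j, (j < n)%nat -> forall z, 0 < z ->
     improper_int_inf (fun y => theta j y / y) z (Om j z + theta j z)) ->
  (forall q, in_dom n q -> forall j, (j < n)%nat -> 0 < I q j) ->
  (forall q, in_dom n q -> forall i j, (i < n)%nat -> (j < n)%nat ->
     exists l, partial_at n (fun r => I r j) q i l) ->
  (forall q, in_dom n q -> forall j, (j < n)%nat ->
     improper_int_0_inf (fun y => hfun b (I q j / y) * theta j y) (F q j)) ->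
  in_dom n p ->
  (forall i j, (i < n)%nat -> (j < n)%nat -> partial_at n (fun r => I r j) p i (dI i j)) ->
  exists D : nat -> nat -> R,
    (forall i j, (i < n)%nat -> (j < n)%nat -> partial_at n (fun r => F r j) p i (D i j)) /\
    row_sum_norm n D <= maxR n (fun i => Rabs (Om i (I p i / b))) * row_sum_norm n dI.
Proof.
  intros Hb Hcont _ _ Hint Hpos _ HF Hp HdI.
  exists (fun i j => Om j (I p j / b) * dI i j). split.
  - intros i j Hi Hj.
    set (T := fun z => Om j z + theta j z).
    assert (HFI : forall q, in_dom n q -> I q j * T (I q j / b) = F q j).
    { intros q Hq. symmetry. apply (truncated_mean_eq (theta j)); auto. }
    apply (partial_at_ext_in_dom _ _ _ _ _ _ HFI Hp).
    assert (Hz : 0 < I p j / b) by (apply Rdiv_lt_0_compat; auto).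
    replace (Om j (I p j / b)) with (T (I p j / b) - theta j (I p j / b)) by (unfold T; ring).
    apply (partial_at_comp n (fun r => I r j) (fun x => x * T (x / b))); auto.
    apply scaled_tail_is_derive; auto.
  - apply row_sum_norm_scale_cols.
Qed.
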